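(* Let $G$ be a cubic graph and $F$ the edge set of a spanning tree of $G$. Then every twisted graph $T=(\vec G,G,<,A)$, with $<$ a total order on the edge set, has a positive sequence on $F$.
   Context: Signed sets on a finite set $E$: pairs $X=(X^+,X^-)$ of disjoint subsets, $X(e)=+1,-1,0$ according as $e\in X^+$, $e\in X^-$, or neither; support $\underline X=X^+\cup X^-$. Conformal: no $e$ with $X(e)=-Y(e)\ne0$; composition $(X\circ Y)(e)=X(e)$ if $X(e)\ne0$, else $Y(e)$. For a total order $<$ on $E$, $\mathcal C(<)=\{(\{e_1,e_3\},\{e_2\}),(\{e_2\},\{e_1,e_3\}):e_1<e_2<e_3\}$ (circuits of the rank 2 oriented matroid $\mathcal M(<)$; vectors are compositions of pairwise conformal families of circuits); for a partial order $\prec$, $\mathcal C(\prec)=\bigcap_{<\supseteq\prec}\mathcal C(<)$. For a directed graph $\vec G=(V,\vec E)$ (no loops, parallel or antiparallel edges), underlying simple graph $G=(V,E)$, a strong map $\mathcal M^*(\vec G)\to\mathcal M(<)$ means every signed minimal cut $(\{(u,w):u\in S,w\notin S\},\{(u,w):w\in S,u\notin S\})$ ($S$, $V\setminus S$ inducing connected subgraphs) is a vector of $\mathcal M(<)$; $C^*_v=(\{(u,v)\in\vec E\},\{(v,u)\in\vec E\})$. A twisted graph $T=(\vec G,G,\prec,A)$: $\prec$ a partial order on $E$, $G$ three-edge-connected, $A\subset\mathcal C(\prec)$, a strong map $\mathcal M^*(\vec G)\to\mathcal M(<)$ for every total $<\supseteq\prec$, and a partition $A=\bigsqcup_v A_v$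 with members of $A_v$ pairwise conformal and composing to $C^*_v$. A positive sequence for $T$ on $F$ is an enumeration $A=\{a_1,\dots,a_m\}$ ($m=|A|$) and an enumeration $F=\{f_2,\dots,f_m\}\subset E$ of distinct edges such that for each $2\le j\le m$: $a_j(f_j)\ne0$; $a_i(f_j)=0$ for all $i>j$; and $a_i(f_j)\in\{0,-a_j(f_j)\}$ for all $i<j$. *)

From mathcomp Require Import all_boot all_order all_algebra.
Set Implicit Arguments. Unset Strict Implicit. Unset Printing Implicit Defensive.

Section TwistedGraphs.
Variables (V : finType) (D : rel V).

(* Directed edges (u,w) of the digraph ~G; they are in bijection with the
   edges {u,w} of the underlying simple graph G (no antiparallel edges). *)
Definition dedge : finType := {p : V * V | D p.1 p.2}.

(* Signed sets on the edge set: X = (X^+, X^-). *)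
Definition sset : finType := ({set dedge} * {set dedge})%type.

Definition is_signed_set (X : sset) : bool := [disjoint X.1 & X.2].

Definition sgn (X : sset) (e : dedge) : int :=
  if e \in X.1 then 1%R else if e \in X.2 then (-1)%R else 0%R.

Definition zero_sset : sset := (set0, set0).

Definition conformal (X Y : sset) : bool :=
  [forall e, ~~ ((sgn X e != 0%R) && (sgn X e == - sgn Y e)%R)].

(* (X o Y)(e) = X(e) if X(e) <> 0, else Y(e). *)
Definition compose (X Y : sset) : sset :=
  (X.1 :|: (Y.1 :\: (X.1 :|: X.2)), X.2 :|: (Y.2 :\: (X.1 :|: X.2))).

Definition compose_seq (s : seq sset) : sset := foldr compose zero_sset s.

Definition strict_partial_order (R : rel dedge) : Prop :=
  irreflexive R /\ transitive R.
Definition strict_total_order (R : rel dedge) : Prop :=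
  strict_partial_order R /\ forall x y, x != y -> R x y || R y x.
Definition extends (prec lt : rel dedge) : Prop := forall x y, prec x y -> lt x y.

Definition circuits (lt : rel dedge) : {set sset} :=
  [set X | [exists e1, exists e2, exists e3,
     [&& lt e1 e2, lt e2 e3 &
       (X == ([set e1; e3], [set e2])) || (X == ([set e2], [set e1; e3]))]]].

Definition in_Cprec (prec : rel dedge) (X : sset) : Prop :=
  forall lt, strict_total_order lt -> extends prec lt -> X \in circuits lt.

Definition is_vector (lt : rel dedge) (X : sset) : Prop :=
  exists s : seq sset, [/\ all (fun Y => Y \in circuits lt) s,
                          pairwise conformal s & X = compose_seq s].

Definition adjG : rel V := fun u w => D u w || D w u.

Definition adjK (K : {set dedge}) : rel V :=
  fun u w => [exists e in K, (val e == (u, w)) || (val e == (w, u))].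

Definition induces_connected (S : {set V}) : Prop :=
  S != set0 /\
  forall u w, u \in S -> w \in S ->
    connect (fun x y => [&& x \in S, y \in S & adjG x y]) u w.

Definition signed_cut (S : {set V}) : sset :=
  ([set e : dedge | ((val e).1 \in S) && ((val e).2 \notin S)],
   [set e : dedge | ((val e).2 \in S) && ((val e).1 \notin S)]).

Definition strong_map (lt : rel dedge) : Prop :=
  forall S : {set V}, induces_connected S -> induces_connected (~: S) ->
    is_vector lt (signed_cut S).

Definition Cstar (v : V) : sset :=
  ([set e : dedge | (val e).2 == v], [set e : dedge | (val e).1 == v]).

Definition spanning_connected (K : {set dedge}) : Prop :=
  forall u w, connect (adjK K) u w.

Definition three_edge_connected : Prop :=
  forall R : {set dedge}, #|R| <= 2 -> spanning_connected (~: R).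

Definition acyclic (K : {set dedge}) : Prop :=
  forall s : seq V, 3 <= size s -> uniq s -> ~~ cycle (adjK K) s.

Definition spanning_tree (K : {set dedge}) : Prop :=
  spanning_connected K /\ acyclic K.

Definition cubic : Prop :=
  forall v : V, #|[set e : dedge | ((val e).1 == v) || ((val e).2 == v)]| = 3.

Definition simple_digraph : Prop :=
  irreflexive D /\ forall u w, D u w -> ~~ D w u.

Definition twisted_graph (prec : rel dedge) (A : {set sset}) : Prop :=
  [/\ strict_partial_order prec,
      three_edge_connected,
      (forall X, X \in A -> in_Cprec prec X),
      (forall lt, strict_total_order lt -> extends prec lt -> strong_map lt) &
      exists Ap : V -> {set sset},
        [/\ A = \bigcup_(v : V) Ap v,
            (forall u v, u != v -> [disjoint Ap u & Ap v]),
            (forall v X Y, X \in Ap v -> Y \in Ap v -> conformal X Y) &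
            (forall v, compose_seq (enum (Ap v)) = Cstar v)]].

(* positive sequence for T on F: a = [:: a_1; ...; a_m], f = [:: f_2; ...; f_m]
   (so f_j is at 0-based index j-2 of f, and a_j at 0-based index j-1 of a). *)
Definition positive_sequence (A : {set sset}) (F : {set dedge}) : Prop :=
  exists (a : seq sset) (f : seq dedge),
    [/\ (uniq a /\ [set x in a] = A), (uniq f /\ [set x in f] = F),
        size f = (size a).-1 &
        forall j : 'I_(size f),
          let fj := tnth (in_tuple f) j in
          let aj := nth zero_sset a j.+1 in
          [/\ sgn aj fj != 0%R,
              (forall i, j.+1 < i < size a -> sgn (nth zero_sset a i) fj = 0%R) &
              (forall i, i < j.+1 ->
                 sgn (nth zero_sset a i) fj \in [:: 0%R; (- sgn aj fj)%R])]].

End TwistedGraphs.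

From mathcomp Require Import all_boot all_order all_algebra.
From mathcomp Require Import zify.
Set Implicit Arguments. Unset Strict Implicit. Unset Printing Implicit Defensive.

(* In a cubic graph every circuit of M(<) and every cocircuit C^*_v has exactly
   three elements, so the conformal decomposition A_v of C^*_v must be {C^*_v}:
   the twisted graph has A = {C^*_v | v in V}.  Grow the spanning tree from a
   root, listing the vertices v_1, ..., v_m so that the tree edge f_j joins v_j
   to an earlier vertex, and put a_j = C^*_(v_j).  The edge f_j lies only in the
   supports of a_j and of C^* of its earlier end, with opposite signs; by
   acyclicity the edges f_j exhaust the tree. *)

Section SignedSets.
Variables (V : finType) (D : rel V).
Local Notation dedge := (dedge D).
Local Notation sset := (sset D).
Implicit Types (X Y C : sset) (e : dedge).

Lemma sgn_compose X Y e :
  sgn (compose X Y) e = if sgn X e != 0%R then sgn X e else sgn Y e.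
Proof.
rewrite /sgn /compose /= !inE.
by case: (e \in X.1); case: (e \in X.2); case: (e \in Y.1); case: (e \in Y.2).
Qed.

Lemma sgn_compose_seq_mem (s : seq sset) X e :
  {in s &, forall Y Z, conformal Y Z} -> X \in s -> sgn X e != 0%R ->
  sgn (compose_seq s) e = sgn X e.
Proof.
elim: s => // Y s IH conf_s; rewrite inE /= sgn_compose => /predU1P[->->//|Xs].
have conf_s' : {in s &, forall Y Z, conformal Y Z}.
  by move=> Z W Zs Ws; apply: conf_s; rewrite inE ?Zs ?Ws orbT.
case: ifP => [nzY nzX|_]; last exact: IH.
have /forallP/(_ e) := conf_s X Y (mem_behead (s := Y :: s) Xs) (mem_head _ _).
rewrite nzX /=; move: nzX nzY; rewrite /sgn.
by case: (e \in X.1); case: (e \in X.2); case: (e \in Y.1); case: (e \in Y.2).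
Qed.

Lemma sset_eq_of_sgn X C :
  is_signed_set X -> #|C.1| + #|C.2| <= #|X.1| + #|X.2| ->
  (forall e, sgn X e != 0%R -> sgn X e = sgn C e) -> X = C.
Proof.
move=> dX cXC agree.
have sub1 : X.1 \subset C.1.
  apply/subsetP => e eX; have := agree e; rewrite /sgn eX => /(_ isT).
  by case: ifP => // _; case: ifP.
have sub2 : X.2 \subset C.2.
  apply/subsetP => e eX; have := agree e; rewrite /sgn eX (disjointFl dX eX).
  by move=> /(_ isT); case: ifP => // _; case: ifP.
have le1 := subset_leq_card sub1; have le2 := subset_leq_card sub2.
case: X C {agree dX} cXC sub1 sub2 le1 le2 => X1 X2 [C1 C2] /= cXC sub1 sub2 le1 le2.
by congr pair; apply/eqP; rewrite eqEcard ?sub1 ?sub2 /=; lia.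
Qed.

Lemma circuit_card (lt : rel dedge) X :
  strict_partial_order lt -> X \in circuits lt ->
  is_signed_set X /\ #|X.1| + #|X.2| = 3.
Proof.
move=> [irr tr]; rewrite inE => /existsP[e1 /existsP[e2 /existsP[e3]]].
move=> /and3P[lt12 lt23 defX].
have ne12 : e1 != e2 by apply: contraTneq lt12 => ->; rewrite irr.
have ne23 : e2 != e3 by apply: contraTneq lt23 => ->; rewrite irr.
have ne13 : e1 != e3 by apply: contraTneq (tr _ _ _ lt12 lt23) => ->; rewrite irr.
have e2_out : e2 \notin [set e1; e3] by rewrite !inE negb_or eq_sym ne12 ne23.
rewrite /is_signed_set; case/orP: defX => /eqP-> /=; rewrite cards2 cards1 ne13.
  by rewrite disjoint_sym disjoints1.
by rewrite disjoints1.
Qed.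

End SignedSets.

Section CubicTwistedGraph.
Variables (V : finType) (D : rel V).
Hypotheses (HD : simple_digraph D) (Hcubic : cubic D).

Lemma Cstar_signed v : is_signed_set (Cstar D v).
Proof.
rewrite /is_signed_set -setI_eq0; apply/eqP/setP => e; rewrite !inE.
apply/negbTE/andP => -[/eqP head_v /eqP tail_v].
by have := valP e; rewrite tail_v head_v HD.1.
Qed.

Lemma card_Cstar v : #|(Cstar D v).1| + #|(Cstar D v).2| = 3.
Proof.
rewrite -cardsUI (disjoint_setI0 (Cstar_signed v)) cards0 addn0 -(Hcubic v).
by apply: eq_card => e; rewrite !inE orbC.
Qed.

Lemma Cstar_inj : injective (Cstar D).
Proof.
move=> u v eq_uv.
have /card_gt0P[e] : 0 < #|[set e : dedge D | ((val e).1 == u) || ((val e).2 == u)]|.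
  by rewrite Hcubic.
rewrite inE => /orP[]/eqP end_u.
  have : e \in (Cstar D v).2 by rewrite -eq_uv inE end_u.
  by rewrite inE end_u => /eqP.
have : e \in (Cstar D v).1 by rewrite -eq_uv inE end_u.
by rewrite inE end_u => /eqP.
Qed.

Lemma twisted_cubic_atoms lt A : strict_total_order lt -> twisted_graph lt A ->
  A = [set Cstar D v | v : V].
Proof.
move=> tot [_ _ A_circ _ [Ap [defA _ Ap_conf Ap_comp]]]; subst A.
have Ap_Cstar v X : X \in Ap v -> X = Cstar D v.
  move=> XA; have [sX cX] : is_signed_set X /\ #|X.1| + #|X.2| = 3.
    by apply: (circuit_card tot.1); apply: A_circ => //; apply/bigcupP; exists v.
  apply: sset_eq_of_sgn; rewrite ?cX ?card_Cstar // => e nz.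
  rewrite -Ap_comp (sgn_compose_seq_mem (X := X)) ?mem_enum //.
  by move=> Y Z; rewrite !mem_enum; apply: Ap_conf.
have Cstar_Ap v : Cstar D v \in Ap v.
  case: (set_0Vmem (Ap v)) => [Ap0|[X XA]]; last by rewrite -(Ap_Cstar v X XA).
  by have := card_Cstar v; rewrite -Ap_comp Ap0 enum_set0 /= !cards0.
apply/setP => X; apply/bigcupP/imsetP => [[v _ XA]|[v _ ->]]; exists v => //.
exact: Ap_Cstar.
Qed.

End CubicTwistedGraph.

Section ForestEdges.
Variables (V : finType) (D : rel V).
Local Notation dedge := (dedge D).
Implicit Types (K F : {set dedge}) (e g : dedge) (u w : V).

Definition joins u w e := (val e == (u, w)) || (val e == (w, u)).

Lemma adjK_sym K : symmetric (adjK K).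
Proof. by move=> u w; apply: eq_existsb => e; rewrite orbC. Qed.

Lemma adjK_subset K K' : K \subset K' -> subrel (adjK K) (adjK K').
Proof.
move=> /subsetP subKK' u w /exists_inP[e eK join_e].
by apply/exists_inP; exists e; rewrite ?subKK'.
Qed.

Lemma joins_endpoints e : joins (val e).1 (val e).2 e.
Proof. by rewrite /joins -surjective_pairing eqxx. Qed.

Lemma connected_cut_edge K (S : {pred V}) x y :
  spanning_connected K -> x \in S -> y \notin S ->
  exists u w, [/\ u \in S, w \notin S & adjK K u w].
Proof.
move=> conK xS yS.
case: (pickP [pred p : V * V | [&& p.1 \in S, p.2 \notin S & adjK K p.1 p.2]]).
  by move=> [u w] /and3P[uS wS uw]; exists u, w.
move=> no_cut; have closedS : closed (adjK K) S.
  apply: intro_closed => [|u w uw uS]; first exact/sym_connect_sym/adjK_sym.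
  by apply: contraT => wS; have := no_cut (u, w); rewrite /= uS wS uw.
by move: yS; rewrite -(closed_connect closedS (conK x y)) xS.
Qed.

Hypothesis HD : simple_digraph D.

Lemma joins_neq u w e : joins u w e -> u != w.
Proof.
case/orP=> /eqP val_e; have := valP e; rewrite val_e.
all: by apply: contraTneq => ->; rewrite HD.1.
Qed.

Lemma joins_inj u w e g : joins u w e -> joins u w g -> e = g.
Proof.
have De := valP e; have Dg := valP g.
move=> /orP[]/eqP val_e /orP[]/eqP val_g; try by apply: val_inj; rewrite val_e val_g.
all: by move: De Dg; rewrite val_e val_g => /HD.2/negbTE->.
Qed.

Lemma acyclic_delete_disconnects F g u w :
  acyclic F -> g \in F -> joins u w g -> ~~ connect (adjK (F :\ g)) u w.
Proof.
move=> acF gF join_g; have uw := joins_neq join_g.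
apply/negP => /connectP[q path_q]; case: (shortenP path_q) => {path_q}.
case=> [|y [|y' p]] path_p uniq_p _ last_p.
- by move: uw; rewrite last_p eqxx.
- move: path_p last_p => /= /andP[/exists_inP[e] /[!inE] /andP[ne_g _] join_e _] w_y.
  by move: ne_g; rewrite -w_y in join_e; rewrite (joins_inj join_e join_g) eqxx.
move/negP: (acF [:: u, y, y' & p] isT uniq_p); apply.
rewrite /cycle rcons_path; apply/andP; split.
  by apply: sub_path path_p; apply/adjK_subset/subD1set.
by rewrite -last_p; apply/exists_inP; exists g; rewrite // /joins orbC.
Qed.

End ForestEdges.

Section TreeOrder.
Variables (V : finType) (D : rel V) (F : {set dedge D}) (v0 : V) (e0 : dedge D).

(* The order in which a tree grown from [s_0] acquires its vertices [s] and
   edges [f]; [v0] and [e0] are only defaults for [nth]. *)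
Definition tree_order (s : seq V) (f : seq (dedge D)) : Prop :=
  [/\ uniq s, uniq f, size s = (size f).+1, {subset f <= F} &
      forall j, j < size f ->
        exists2 k, k <= j & joins (nth v0 s k) (nth v0 s j.+1) (nth e0 f j)].

Lemma tree_order_endpoints s f e : tree_order s f -> e \in f ->
  ((val e).1 \in s) && ((val e).2 \in s).
Proof.
move=> [_ _ size_s _ attach] ef; have jf : index e f < size f by rewrite index_mem.
have [k kj] := attach _ jf; rewrite nth_index // => /orP[]/eqP->.
all: by rewrite /= !mem_nth // size_s; lia.
Qed.

Lemma tree_order_connect s f x : tree_order s f -> x \in s ->
  connect (adjK [set e in f]) (nth v0 s 0) x.
Proof.
move=> [_ _ size_s _ attach] /(nthP v0)[i + <-].
elim/ltn_ind: i => -[|j] IH js; first exact: connect0.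
have jf : j < size f by rewrite -ltnS -size_s.
have [k kj join_kj] := attach j jf.
apply: connect_trans (IH k _ _) (connect1 _); first by rewrite ltnS.
  exact: leq_ltn_trans kj (ltnW js).
by apply/exists_inP; exists (nth e0 f j); rewrite // inE mem_nth.
Qed.

Lemma tree_order_extend s f : spanning_connected F -> tree_order s f ->
  size s < #|V| -> exists z g, tree_order (rcons s z) (rcons f g).
Proof.
move=> conF ord lt_s; have [uniq_s uniq_f size_s sub_f attach] := ord.
have [x x_out] : exists x, x \notin s.
  apply/existsP; rewrite -negb_forall; apply: contraTN lt_s => /forallP s_full.
  rewrite -leqNgt -(card_uniqP uniq_s).
  by apply/subset_leq_card/subsetP => y _; apply: s_full.
have s0_in : nth v0 s 0 \in s by rewrite mem_nth // size_s.
have [u [w [us ws /exists_inP[g gF join_g]]]] := connected_cut_edge conF s0_in x_out.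
have g_out : g \notin f.
  apply: contra ws => /(tree_order_endpoints ord).
  by case/orP: join_g => /eqP-> /andP[].
exists w, g; split.
- by rewrite rcons_uniq ws.
- by rewrite rcons_uniq g_out.
- by rewrite !size_rcons size_s.
- by move=> e; rewrite mem_rcons inE => /predU1P[->|/sub_f].
move=> j; rewrite size_rcons ltnS leq_eqVlt => /predU1P[->|jf].
  exists (index u s); first by rewrite -ltnS -size_s index_mem.
  by rewrite !nth_rcons index_mem us nth_index // size_s !ltnn !eqxx.
have [k kj join_kj] := attach j jf.
by exists k; rewrite // !nth_rcons size_s !ltnS jf (leq_trans kj (ltnW jf)).
Qed.

Lemma tree_order_exists : spanning_connected F ->
  exists s f, tree_order s f /\ size s = #|V|.
Proof.
move=> conF.
suff grow n s f : tree_order s f -> size s + n = #|V| ->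
    exists s' f', tree_order s' f' /\ size s' = #|V|.
  apply: (grow #|V|.-1 [:: v0] [::]) => //; rewrite add1n prednK //.
  by apply/card_gt0P; exists v0.
elim: n s f => [|n IH] s f ord size_s; first by exists s, f; rewrite -size_s addn0.
have [|z [g ord']] := tree_order_extend conF ord; first by rewrite -size_s; lia.
by apply: IH ord' _; rewrite size_rcons -size_s; lia.
Qed.

Lemma tree_order_spanning s f : simple_digraph D -> acyclic F ->
  tree_order s f -> size s = #|V| -> (forall x, x \in s) /\ [set e in f] = F.
Proof.
move=> HD acF ord size_s; have [uniq_s _ _ sub_f _] := ord.
have s_full x : x \in s.
  apply: contraT => x_out; have uniq_xs : uniq (x :: s) by rewrite /= x_out.
  by have := max_card (mem (x :: s)); rewrite (card_uniqP uniq_xs) /= size_s ltnn.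
split=> //; apply/setP => g; rewrite inE; apply/idP/idP => [/sub_f //|gF].
apply/negPn/negP => g_out.
have f_sub : [set e in f] \subset F :\ g.
  apply/subsetP => e; rewrite !inE => ef; rewrite sub_f // andbT.
  by apply: contraNneq g_out => <-.
have conn_f : connect (adjK [set e in f]) (val g).1 (val g).2.
  apply: connect_trans (tree_order_connect ord (s_full _)).
  by rewrite (sym_connect_sym (adjK_sym _)); apply: tree_order_connect ord (s_full _).
move/negP: (acyclic_delete_disconnects HD acF gF (joins_endpoints g)); apply.
by apply: connect_sub conn_f => u w /(adjK_subset f_sub)/connect1.
Qed.

End TreeOrder.

Section PositiveSequence.
Variables (V : finType) (D : rel V).
Hypotheses (HD : simple_digraph D) (Hcubic : cubic D).

Lemma sgn_Cstar_joins u w e : joins u w e ->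
  [/\ sgn (Cstar D w) e != 0%R, sgn (Cstar D u) e = (- sgn (Cstar D w) e)%R &
      forall x, x != u -> x != w -> sgn (Cstar D x) e = 0%R].
Proof.
move=> join_e; have uw := joins_neq HD join_e; have wu : w != u by rewrite eq_sym.
case/orP: join_e => /eqP val_e.
all: rewrite /sgn /Cstar !inE val_e /= !eqxx ?(negbTE uw) ?(negbTE wu).
all: split => // x xu xw; rewrite !inE val_e /=.
all: by rewrite ?(eq_sym w) ?(negbTE xw) ?(eq_sym u) ?(negbTE xu).
Qed.

Lemma positive_sequence_of_tree_order F v0 e0 s f :
  tree_order F v0 e0 s f -> (forall x, x \in s) -> [set e in f] = F ->
  positive_sequence [set Cstar D v | v : V] F.
Proof.
move=> [uniq_s uniq_f size_s _ attach] s_full f_F.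
exists (map (Cstar D) s), f; split => //.
- split; first by rewrite (map_inj_uniq (Cstar_inj Hcubic)).
  apply/setP => X; rewrite inE.
  by apply/mapP/imsetP => -[v _ ->]; exists v.
- by rewrite size_map size_s.
move=> j; rewrite (tnth_nth e0) /=; have jf := ltn_ord j.
have [k kj join_kj] := attach j jf.
have js : j.+1 < size s by rewrite size_s ltnS.
have ks : k < size s by rewrite size_s ltnS (leq_trans kj (ltnW jf)).
have [nz opp off] := sgn_Cstar_joins join_kj.
rewrite (nth_map v0) //; split => // i.
  rewrite size_map => /andP[ji i_s]; rewrite (nth_map v0) //.
  by apply: off; rewrite nth_uniq // gtn_eqF // (leq_ltn_trans kj (ltnW ji)).
move=> ij; have i_s : i < size s by apply: ltn_trans ij js.
rewrite (nth_map v0) //; have [->|ik] := eqVneq (nth v0 s i) (nth v0 s k).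
  by rewrite opp !inE eqxx orbT.
by rewrite off // ?inE ?eqxx // nth_uniq // ltn_eqF.
Qed.

End PositiveSequence.

Theorem mainTheorem16 (V : finType) (D : rel V)
  (HD : simple_digraph D) (Hcubic : cubic D)
  (F : {set dedge D}) (HF : spanning_tree F)
  (lt : rel (dedge D)) (Hlt : strict_total_order lt)
  (A : {set sset D}) (HT : twisted_graph lt A) :
  positive_sequence A F.
Proof.
rewrite (twisted_cubic_atoms HD Hcubic Hlt HT).
case: (pickP (@predT V)) => [v0 _|V0].
  have /card_gt0P[e0 _] :
      0 < #|[set e : dedge D | ((val e).1 == v0) || ((val e).2 == v0)]|.
    by rewrite Hcubic.
  have [s [f [ord size_s]]] := tree_order_exists v0 e0 HF.1.
  have [s_full f_F] := tree_order_spanning HD HF.2 ord size_s.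
  exact: positive_sequence_of_tree_order ord s_full f_F.
exists [::], [::]; split => //; last by case.
- by split => //; apply/setP => X; rewrite inE; apply/esym/imsetP => -[v]; have := V0 v.
- by split => //; apply/setP => e; rewrite inE; have := V0 (val e).1.
Qed.
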